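(* Let $\Theta\subset\mathbb{R}$ be a finite set of states, $\pi$ a probability distribution on $\Theta$ (Alice's prior) and $\widetilde\pi$ a probability distribution on $\Theta$ (Carroll's prior). Then Carroll is monotonic-optimistic if and only if $\widetilde\pi$ is a monotonic strengthening of $\pi$. Moreover, these are also equivalent to each of the following statements: (i) $\widetilde\pi\ge_{\mathrm{lr}}\pi$ on $\Theta$; (ii) $\widetilde{\mathbb{P}}\ge_{\mathrm{lr}}\mathbb{P}$ on $S$ for every MLRP signaling structure $(S,\sigma)$; (iii) $(R,\widetilde{\mathbb{P}})\ge_{\mathrm{lr}}(R,\mathbb{P})$ for every MLRP signaling structure $(S,\sigma)$ and every increasing function $R:S\to\mathbb{R}$.
   Context: A signaling structure on $\Theta$ is a finite set $S\subset\mathbb{R}$ of signals with probabilities $\sigma(s\mid\theta)\ge0$, $\sum_{s\in S}\sigma(s\mid\theta)=1$ for each $\theta$. It has the monotone likelihood ratio property (MLRP) if $\sigma(s'\mid\theta)/\sigma(s\mid\theta)$ is (weakly) increasing in $\theta$ whenever $s'>s$. For a prior $\rho$, $\mathbb{P}_{\rho,\sigma}(\theta,s)=\rho(\theta)\sigma(s\mid\theta)$; write $\mathbb{P}=\mathbb{P}_{\pi,\sigma}$, $\widetilde{\mathbb{P}}=\mathbb{P}_{\widetilde\pi,\sigma}$ (and their marginals on $S$). For $\Gamma\subseteq\Theta$, Alice's posterior is $Q_\Gamma(s)=\mathbb{P}(\Gamma\mid s)$ (for $\mathbb{P}(s)>0$). For a function $R$ on $S$ and a probability $\mathbb{Q}$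 on $S$, $(R,\mathbb{Q})$ denotes the random variable taking value $R(s)$ with probability $\mathbb{Q}(s)$. $X\ge_{\mathrm{lr}}Y$ (likelihood ratio order) means $\mathbb{P}(X=v)/\mathbb{P}(Y=v)$ is weakly increasing in $v$ (equivalently $\mathbb{P}(X=u)\mathbb{P}(Y=v)\le\mathbb{P}(X=v)\mathbb{P}(Y=u)$ for $u<v$); for distributions on $\Theta$ or $S$ it is applied to the identity random variable. A set $\Gamma\subseteq\Theta$ is an upper set if $\theta\in\Gamma$, $\theta'\in\Theta$, $\theta'>\theta$ imply $\theta'\in\Gamma$. Carroll is monotonic-optimistic if $(Q_\Gamma,\widetilde{\mathbb{P}})\ge_{\mathrm{lr}}(Q_\Gamma,\mathbb{P})$ for every upper set $\Gamma\subseteq\Theta$ and every MLRP signaling structure $(S,\sigma)$. For a prior $\rho$ and $\Gamma$ with $\rho(\Gamma)>0$, a $\Gamma$-strengthening of $\rho$ is any $a\rho^\Gamma+(1-a)\rho$ with $a\in[0,1]$, where $\rho^\Gamma(\theta)=\rho(\theta\mid\Gamma)$. $\widetilde\pi$ is a monotonic strengthening of $\pi$ if it is obtained by a finite sequence of $\Gamma_i$-strengthenings starting from $\pi$ (each applied to the distribution obtained at the previous step), where all $\Gamma_i\subset\Theta$ are upper sets. Increasing means weakly increasing. *)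

From HB Require Import structures.
From mathcomp Require Import all_boot all_order all_algebra.
From mathcomp Require Import finmap.
From mathcomp Require Import reals.

Set Implicit Arguments.
Unset Strict Implicit.
Unset Printing Implicit Defensive.

Import Order.TTheory GRing.Theory Num.Theory.
Local Open Scope ring_scope.
Local Open Scope fset_scope.

Section Defs.
Variable R : realType.

(* Finite subsets of R (states Theta, signals S, events Gamma) are {fset R}.
   Distributions / functions are total functions R -> R; only their values
   on the relevant finite set matter. *)

Definition mass (rho : R -> R) (A : {fset R}) : R := \sum_(x <- A) rho x.

Definition is_prob (A : {fset R}) (rho : R -> R) : Prop :=
  (forall x, x \in A -> 0 <= rho x) /\ mass rho A = 1.

(* sigma th s = sigma(s | th): (S, sigma) is a signaling structure on Theta *)
Definition signaling (Theta S : {fset R}) (sigma : R -> R -> R) : Prop :=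
  forall th, th \in Theta ->
    (forall s, s \in S -> 0 <= sigma th s) /\ \sum_(s <- S) sigma th s = 1.

(* MLRP: sigma(s'|th)/sigma(s|th) weakly increasing in th whenever s' > s,
   written in cross-multiplied form (the standard reading with zeros). *)
Definition MLRP (Theta S : {fset R}) (sigma : R -> R -> R) : Prop :=
  forall s s' th th', s \in S -> s' \in S -> th \in Theta -> th' \in Theta ->
    s < s' -> th < th' ->
    sigma th s' * sigma th' s <= sigma th' s' * sigma th s.

Definition marg (Theta : {fset R}) (rho : R -> R) (sigma : R -> R -> R) (s : R) : R :=
  \sum_(th <- Theta) rho th * sigma th s.

(* Prob((Rf, Q) = v) for the random variable taking value Rf s w.p. Q s, s in S *)
Definition pmass (S : {fset R}) (Rf : R -> R) (Q : R -> R) (v : R) : R :=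
  \sum_(s <- S | Rf s == v) Q s.

Definition lr_ge (S : {fset R}) (Rf : R -> R) (Q1 Q2 : R -> R) : Prop :=
  forall u v, u < v -> pmass S Rf Q1 u * pmass S Rf Q2 v <= pmass S Rf Q1 v * pmass S Rf Q2 u.

(* Alice's posterior Q_Gamma(s) = P(Gamma | s) (value irrelevant when P(s) = 0) *)
Definition posterior (Theta Gamma : {fset R}) (pi : R -> R) (sigma : R -> R -> R) (s : R) : R :=
  (\sum_(th <- Theta | th \in Gamma) pi th * sigma th s) / marg Theta pi sigma s.

Definition upper_set (Theta Gamma : {fset R}) : Prop :=
  (forall th, th \in Gamma -> th \in Theta) /\
  (forall th th', th \in Gamma -> th' \in Theta -> th < th' -> th' \in Gamma).

Definition cond (rho : R -> R) (Gamma : {fset R}) (th : R) : R :=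
  if th \in Gamma then rho th / mass rho Gamma else 0.

Definition strengthen (Gamma : {fset R}) (a : R) (rho : R -> R) (th : R) : R :=
  a * cond rho Gamma th + (1 - a) * rho th.

Inductive mono_reach (Theta : {fset R}) (rho : R -> R) : (R -> R) -> Prop :=
| mono_reach0 : mono_reach Theta rho rho
| mono_reachS (rho1 : R -> R) (Gamma : {fset R}) (a : R) :
    mono_reach Theta rho rho1 -> upper_set Theta Gamma -> 0 <= a <= 1 ->
    0 < mass rho1 Gamma -> mono_reach Theta rho (strengthen Gamma a rho1).

Definition monotonic_strengthening (Theta : {fset R}) (pi pit : R -> R) : Prop :=
  exists rho, mono_reach Theta pi rho /\ {in Theta, pit =1 rho}.

Definition monotonic_optimistic (Theta : {fset R}) (pi pit : R -> R) : Prop :=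
  forall Gamma : {fset R}, upper_set Theta Gamma ->
  forall (S : {fset R}) (sigma : R -> R -> R), signaling Theta S sigma -> MLRP Theta S sigma ->
    lr_ge S (posterior Theta Gamma pi sigma) (marg Theta pit sigma) (marg Theta pi sigma).

End Defs.

From HB Require Import structures.
From mathcomp Require Import all_boot all_order all_algebra.
From mathcomp Require Import finmap.
From mathcomp Require Import reals.
From mathcomp Require Import ring lra.

Import Order.TTheory GRing.Theory Num.Theory.
Local Open Scope fset_scope.
Local Open Scope ring_scope.

(* All statements are equivalent to the likelihood-ratio order of the priors,
   pit u * pi v <= pit v * pi u for u < v, i.e. to the ratio r = pit / pi being
   nondecreasing on Theta.
   A strengthening multiplies the prior by a nonnegative nondecreasing step
   function, which preserves this order.  Conversely, raising the floor of r
   from max r down to 0 one value at a time goes from pi to pit, and each step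
   is a strengthening with the upper set {r > x}.
   An MLRP signal transports the order to the marginals on signals (symmetrize
   the double sum: each term is a product of two factors of the same sign),
   which gives (ii) and (iii); since pi restricted to an upper set dominates pi,
   Alice's posterior of an upper set is increasing in the signal, which gives
   monotonic optimism.  For the converses the fully informative signal turns
   (ii) into the order on Theta, and for optimism it suffices (pi > 0) to treat
   adjacent states u < v: a four-signal MLRP structure on which u and v share
   two signals with different odds makes the two posteriors distinct and
   interior, and optimism at these two values is exactly the inequality. *)

Lemma sum_delta {T : choiceType} {V : pzSemiRingType} (A : {fset T}) (F : T -> V) k :
  k \in A -> \sum_(x <- A) F x * (x == k)%:R = F k.
Proof.
move=> kA; under eq_bigr do rewrite mulr_natr mulrb.
by rewrite -big_mkcond (fbig_pred1_inj (k := id) A k kA).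
Qed.

Lemma sum_symmetrize {I : Type} {V : nmodType} (r : seq I) (F : I -> I -> V) :
  \sum_(x <- r) \sum_(y <- r) (F x y + F y x) =
  (\sum_(x <- r) \sum_(y <- r) F x y) *+ 2.
Proof.
under eq_bigr do rewrite big_split /=.
by rewrite big_split /= [X in _ + X]exchange_big mulr2n.
Qed.

Lemma fset_argmin {T : choiceType} {d} {V : orderType d} (A : {fset T}) (F : T -> V) a :
  a \in A -> exists2 b, b \in A & {in A, forall c, (F b <= F c)%O}.
Proof.
move=> aA; case: (arg_minP (F \o val) (isT : predT [` aA])) => [[b bA]] _ min_b.
by exists b => // c cA; exact: (min_b [` cA]).
Qed.

Section LikelihoodRatio.
Context {R : realType}.
Implicit Types (A : {fset R}) (p q : R -> R).

Definition lr_ge_on A p q :=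
  forall u v, u \in A -> v \in A -> u < v -> p u * q v <= p v * q u.

Lemma pmass_pred1 A (Rf Q : R -> R) k : k \in A ->
  {in A, forall s, (Rf s == Rf k) = (s == k)} -> pmass A Rf Q (Rf k) = Q k.
Proof.
move=> kA Rf_k; rewrite /pmass big_seq_cond.
rewrite (eq_bigl (fun s => (s \in A) && (s == k))) -?big_seq_cond.
  by rewrite (fbig_pred1_inj (k := id) A k kA).
by move=> s; case: (boolP (s \in A)) => //= /Rf_k.
Qed.

Lemma pmass_id A Q u : pmass A (fun x => x) Q u = (u \in A)%:R * Q u.
Proof.
have [uA|uA] := boolP (u \in A); first by rewrite mul1r (pmass_pred1 _ (fun x => x) _ u uA).
rewrite mul0r /pmass big_seq_cond big_pred0 // => s.
by apply/negP => /andP[sA /eqP su]; rewrite -su sA in uA.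
Qed.

Lemma lr_ge_idP A p q : lr_ge A (fun x => x) p q <-> lr_ge_on A p q.
Proof.
split=> lr u v => [uA vA uv|uv]; first by move: (lr u v uv); rewrite !pmass_id uA vA !mul1r.
rewrite !pmass_id; have [uA|] := boolP (u \in A); last by rewrite !mul0r mulr0.
have [vA|] := boolP (v \in A); last by rewrite !mul0r mulr0.
by rewrite !mul1r; exact: lr.
Qed.

Lemma lr_ge_onMr A p q c :
  {in A, forall x, 0 <= p x} -> {in A, forall x, 0 <= q x} ->
  {in A, forall x, 0 <= c x} -> {in A &, {homo c : x y / x <= y}} ->
  lr_ge_on A p q -> lr_ge_on A (fun x => p x * c x) q.
Proof.
move=> p0 q0 c0 c_mono pq u v uA vA uv.
rewrite mulrAC [p v * _ * _]mulrAC.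
apply: le_trans (ler_wpM2r (c0 u uA) (pq u v uA vA uv)) _.
by rewrite ler_wpM2l ?mulr_ge0 ?p0 ?q0 ?c_mono ?ltW.
Qed.

Lemma lr_pair_trans (pu pv pw qu qv qw : R) : 0 <= qu -> 0 <= qv -> 0 < qw ->
  pu * qw <= pw * qu -> pw * qv <= pv * qw -> pu * qv <= pv * qu.
Proof.
move=> qu0 qv0 qw_pos uw wv; rewrite -(ler_pM2r qw_pos).
have := ler_wpM2r qv0 uw; have := ler_wpM2r qu0 wv; nra.
Qed.

Lemma lr_ge_on_of_adjacent A p q : {in A, forall x, 0 < q x} ->
  (forall u v, u \in A -> v \in A -> u < v ->
     (forall w, w \in A -> u < w -> v <= w) -> p u * q v <= p v * q u) ->
  lr_ge_on A p q.
Proof.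
move=> q_pos adjacent.
pose between u v := [fset w in A | u < w < v].
suff lr n : forall u v, u \in A -> v \in A -> u < v ->
    #|` between u v| = n -> p u * q v <= p v * q u.
  by move=> u v uA vA uv; exact: lr.
elim/ltn_ind: n => n IH u v uA vA uv card_uv.
have [empty|[w]] := fset_0Vmem (between u v).
  apply: adjacent => // w wA uw; rewrite leNgt; apply/negP => wv.
  by have := in_fset0 w; rewrite -empty !inE wA uw wv.
rewrite !inE => /andP[wA /andP[uw wv]].
have smaller a b : u <= a -> b <= v -> w \notin between a b ->
    (#|` between a b| < n)%N.
  move=> ua bv wab; rewrite -card_uv; apply: fproper_ltn_card.
  rewrite fproperEneq; apply/andP; split.
    by apply/negP => /eqP eq_ab; rewrite eq_ab !inE wA uw wv in wab.
  apply/fsubsetP => x; rewrite !inE => /andP[-> /andP[ax xb]].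
  by rewrite (le_lt_trans ua ax) (lt_le_trans xb bv).
have lr_uw : p u * q w <= p w * q u.
  have: (#|` between u w| < n)%N by rewrite smaller ?lexx ?ltW // !inE ltxx !andbF.
  by move/IH; apply.
have lr_wv : p w * q v <= p v * q w.
  have: (#|` between w v| < n)%N by rewrite smaller ?lexx ?ltW // !inE ltxx andbF.
  by move/IH; apply.
exact: lr_pair_trans (ltW (q_pos u uA)) (ltW (q_pos v vA)) (q_pos w wA) lr_uw lr_wv.
Qed.

End LikelihoodRatio.

Section Marginals.
Context {R : realType}.
Implicit Types (Theta S Gamma : {fset R}) (p q rho : R -> R).

Lemma lr_ge_on_marg Theta S sigma p q :
  MLRP Theta S sigma -> lr_ge_on Theta p q ->
  lr_ge_on S (marg Theta p sigma) (marg Theta q sigma).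
Proof.
move=> mlrp pq a b aS bS ab; rewrite /marg !big_distrl /=.
under eq_bigr do rewrite big_distrr /=.
under [X in _ <= X]eq_bigr do rewrite big_distrr /=.
rewrite -(ler_pMn2r (n := 2)) // -!sum_symmetrize.
rewrite big_seq [X in _ <= X]big_seq; apply: ler_sum => x xT.
rewrite big_seq [X in _ <= X]big_seq; apply: ler_sum => y yT.
rewrite -subr_ge0.
(* for x < y both factors are <= 0, by the LR order and by MLRP *)
set d := (X in 0 <= X).
have -> : d = (p x * q y - p y * q x) *
              (sigma x b * sigma y a - sigma x a * sigma y b) by rewrite /d; ring.
have [xy|yx|->] := ltgtP x y; last by rewrite subrr mul0r.
- by rewrite mulr_le0 // subr_le0 ?pq // [sigma x a * _]mulrC mlrp.
- by rewrite mulr_ge0 // subr_ge0 ?pq // [sigma x a * _]mulrC mlrp.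
Qed.

Lemma lr_ge_of_lr_ge_on S (Rf P1 P2 : R -> R) :
  lr_ge_on S P1 P2 -> {in S, forall s, P2 s = 0 -> P1 s = 0} ->
  (forall a b, a \in S -> b \in S -> P2 a != 0 -> P2 b != 0 ->
     a <= b -> Rf a <= Rf b) ->
  lr_ge S Rf P1 P2.
Proof.
move=> lr abs_cont Rf_mono x y xy; rewrite /pmass.
rewrite [X in _ <= X]mulrC !big_distrl /=.
rewrite big_seq_cond [X in _ <= X]big_seq_cond; apply: ler_sum => a /andP[aS /eqP ax].
rewrite !big_distrr /=.
rewrite big_seq_cond [X in _ <= X]big_seq_cond; apply: ler_sum => b /andP[bS /eqP b_y].
have [a0|a0] := eqVneq (P2 a) 0; first by rewrite a0 (abs_cont a) // !mul0r.
have [b0|b0] := eqVneq (P2 b) 0; first by rewrite b0 (abs_cont b) // !mulr0.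
have ab : a < b.
  by rewrite ltNge; apply/negP => /(Rf_mono _ _ bS aS b0 a0); rewrite ax b_y leNgt xy.
by rewrite [X in _ <= X]mulrC lr.
Qed.

Lemma marg_ge0 Theta S sigma rho s : signaling Theta S sigma ->
  {in Theta, forall th, 0 <= rho th} -> s \in S -> 0 <= marg Theta rho sigma s.
Proof.
move=> sg rho0 sS; rewrite /marg big_seq sumr_ge0 // => th thT.
by rewrite mulr_ge0 ?rho0 // (sg th thT).1.
Qed.

Lemma marg_abs_cont Theta S sigma p q s : signaling Theta S sigma ->
  {in Theta, forall th, 0 < q th} -> s \in S ->
  marg Theta q sigma s = 0 -> marg Theta p sigma s = 0.
Proof.
move=> sg q_pos sS /eqP; rewrite /marg !big_seq psumr_eq0 => [/allP q_sigma0|th thT].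
  rewrite big1 // => th thT; have /implyP/(_ thT) := q_sigma0 th thT.
  by rewrite mulf_eq0 gt_eqF ?q_pos //= => /eqP ->; rewrite mulr0.
by apply: mulr_ge0; [exact/ltW/q_pos | exact: (sg th thT).1].
Qed.

Lemma posteriorE Theta Gamma pi sigma s :
  posterior Theta Gamma pi sigma s =
  marg Theta (fun th => pi th * (th \in Gamma)%:R) sigma s / marg Theta pi sigma s.
Proof.
rewrite /posterior /marg big_mkcond; congr (_ / _); apply: eq_bigr => th _.
by case: (th \in Gamma); rewrite ?mulr1 ?mulr0 ?mul0r.
Qed.

Lemma posterior_mono Theta S Gamma sigma pi a b :
  upper_set Theta Gamma -> MLRP Theta S sigma -> {in Theta, forall th, 0 <= pi th} ->
  a \in S -> b \in S -> 0 < marg Theta pi sigma a -> 0 < marg Theta pi sigma b ->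
  a <= b -> posterior Theta Gamma pi sigma a <= posterior Theta Gamma pi sigma b.
Proof.
move=> [_ Gamma_up] mlrp pi0 aS bS Pa Pb; rewrite le_eqVlt => /predU1P[<-|ab]; first exact: lexx.
rewrite !posteriorE ler_pdivrMr // mulrAC ler_pdivlMr //.
apply: (lr_ge_on_marg _ _ _ _ _ mlrp _ a b aS bS ab).
apply: lr_ge_onMr => // [th th' thT th'T|u v _ _ _]; last by rewrite mulrC.
rewrite le_eqVlt => /predU1P[->//|/(Gamma_up th th') Gamma_th'].
by case: (boolP (th \in Gamma)) => [/Gamma_th'->|]; rewrite ?ler0n.
Qed.

Lemma lr_ge_marg_of_lr_ge_on Theta pi pit : {in Theta, forall th, 0 < pi th} ->
  lr_ge_on Theta pit pi ->
  forall S sigma, signaling Theta S sigma -> MLRP Theta S sigma ->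
  forall Rf : R -> R, {in S &, forall s s', s <= s' -> Rf s <= Rf s'} ->
  lr_ge S Rf (marg Theta pit sigma) (marg Theta pi sigma).
Proof.
move=> pi_pos lr S sigma sg mlrp Rf Rf_mono.
apply: lr_ge_of_lr_ge_on; first exact: lr_ge_on_marg.
  by move=> s sS; apply: marg_abs_cont sg pi_pos sS.
by move=> a b aS bS _ _; apply: Rf_mono.
Qed.

Lemma optimistic_of_lr_ge_on Theta pi pit : {in Theta, forall th, 0 < pi th} ->
  lr_ge_on Theta pit pi -> monotonic_optimistic Theta pi pit.
Proof.
move=> pi_pos lr Gamma Gamma_up S sigma sg mlrp.
have pi0 : {in Theta, forall th, 0 <= pi th} by move=> th /pi_pos/ltW.
apply: lr_ge_of_lr_ge_on; first exact: lr_ge_on_marg.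
  by move=> s sS; apply: marg_abs_cont sg pi_pos sS.
move=> a b aS bS Pa Pb; apply: (posterior_mono _ S) => //.
  by rewrite lt_def Pa (marg_ge0 _ S).
by rewrite lt_def Pb (marg_ge0 _ S).
Qed.

Lemma lr_ge_on_of_lr_ge_marg Theta pi pit :
  (forall S sigma, signaling Theta S sigma -> MLRP Theta S sigma ->
     lr_ge S (fun s => s) (marg Theta pit sigma) (marg Theta pi sigma)) ->
  lr_ge_on Theta pit pi.
Proof.
pose sigma (th s : R) : R := (th == s)%:R.
have marg_sigma rho s : s \in Theta -> marg Theta rho sigma s = rho s.
  by move=> sT; rewrite /marg sum_delta.
move=> /(_ Theta sigma) lr u v uT vT uv.
rewrite -(marg_sigma pit _ uT) -(marg_sigma pi _ uT) -(marg_sigma pit _ vT) -(marg_sigma pi _ vT).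
apply: (lr_ge_idP _ _ _).1 uT vT uv; apply: lr.
  move=> th thT; split=> [s _|]; first exact: ler0n.
  by rewrite /sigma; under eq_bigr do rewrite eq_sym -[_%:R]mul1r; rewrite sum_delta.
move=> s s' th th' _ _ _ _ ss' thth'; rewrite /sigma.
have [th_s'|] := eqVneq th s'; last by rewrite mul0r mulr_ge0.
have [th'_s|] := eqVneq th' s; last by rewrite mulr0 mulr_ge0.
by move: thth'; rewrite th_s' th'_s ltNge (ltW ss').
Qed.

End Marginals.

Section Strengthening.
Context {R : realType}.
Implicit Types (Theta Gamma : {fset R}) (rho : R -> R).

Lemma strengthenE Gamma a rho th :
  strengthen Gamma a rho th =
  rho th * ((th \in Gamma)%:R * (a / mass rho Gamma) + (1 - a)).
Proof. by rewrite /strengthen /cond; case: (th \in Gamma) => /=; ring. Qed.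

Lemma lr_ge_on_of_reach Theta pi rho : {in Theta, forall th, 0 < pi th} ->
  mono_reach Theta pi rho ->
  {in Theta, forall th, 0 <= rho th} /\ lr_ge_on Theta rho pi.
Proof.
move=> pi_pos; elim=> [|rho1 Gamma a _ [rho1_ge0 lr] [_ Gamma_up] /andP[a0 a1] mass_pos].
  by split=> [th /pi_pos/ltW|u v _ _ _]; rewrite // mulrC.
pose c th := (th \in Gamma)%:R * (a / mass rho1 Gamma) + (1 - a).
have c0 th : 0 <= c th.
  by rewrite /c addr_ge0 ?subr_ge0 // mulr_ge0 ?divr_ge0 ?(ltW mass_pos).
have c_mono : {in Theta &, {homo c : x y / x <= y}}.
  move=> th th' _ th'T; rewrite le_eqVlt => /predU1P[->//|thth'].
  rewrite /c lerD2r ler_wpM2r ?divr_ge0 ?(ltW mass_pos) // ler_nat.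
  by case: (boolP (th \in Gamma)) => [/(Gamma_up th th')->|].
have strengthen_c : strengthen Gamma a rho1 =1 fun th => rho1 th * c th.
  by move=> th; rewrite strengthenE.
split=> [th thT|]; first by rewrite strengthen_c mulr_ge0 ?rho1_ge0.
have lr_c : lr_ge_on Theta (fun th => rho1 th * c th) pi.
  by apply: lr_ge_onMr => // th /pi_pos/ltW.
by move=> u v uT vT uv; rewrite !strengthen_c; exact: lr_c.
Qed.

Lemma strengthen_of_rescale Theta Gamma rho tau (be ga : R) :
  {subset Gamma <= Theta} -> mass rho Theta = 1 -> 0 < mass rho Gamma ->
  0 <= ga <= be ->
  {in Theta, forall th, tau th = rho th * (if th \in Gamma then be else ga)} ->
  mass tau Theta = 1 ->
  0 <= 1 - ga <= 1 /\ {in Theta, tau =1 strengthen Gamma (1 - ga) rho}.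
Proof.
move=> sub rho1 m_pos /andP[ga0 ga_be] tau_eq tau1.
set m := mass rho Gamma in m_pos *.
have mass_split (F : R -> R) : \sum_(th <- Theta) F th =
    \sum_(th <- Gamma) F th + \sum_(th <- Theta | th \notin Gamma) F th.
  rewrite (bigID (mem Gamma)) /= big_fset_condE; congr (\sum_(i <- _) _ + _).
  by f_equal; apply/fsetP => x; rewrite !inE andb_idl // => /sub.
have rest : \sum_(th <- Theta | th \notin Gamma) rho th = 1 - m.
  by rewrite -rho1 /mass mass_split -/m addrC addKr.
have tau_mass : mass tau Theta = be * m + ga * (1 - m).
  rewrite /mass (eq_big_seq _ tau_eq) mass_split -rest /m /mass !big_distrr /=.
  rewrite big_seq [X in _ = X + _]big_seq.
  congr (_ + _); apply: eq_bigr => th.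
    by move=> thG; rewrite thG mulrC.
  by move=> /negbTE ->; rewrite mulrC.
have one_ga : 1 - ga = (be - ga) * m by rewrite -tau1 tau_mass; ring.
split.
  by rewrite {1}one_ga mulr_ge0 ?subr_ge0 ?(ltW m_pos) //= lerBlDr lerDl.
move=> th thT; rewrite tau_eq // strengthenE -/m {1}one_ga mulfK ?gt_eqF //.
by case: (th \in Gamma) => /=; ring.
Qed.

End Strengthening.

Section FlooredRatio.
Context {R : realType}.
Variables (Theta : {fset R}) (pi pit : R -> R).
Hypotheses (pi_pos : {in Theta, forall th, 0 < pi th})
  (pit_ge0 : {in Theta, forall th, 0 <= pit th})
  (pi1 : mass pi Theta = 1) (pit1 : mass pit Theta = 1)
  (lr : lr_ge_on Theta pit pi).

Let ratio th := pit th / pi th.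
Let weight x th := pi th * Num.max (ratio th) x.
Let Z x := mass (weight x) Theta.
Let floored x th := weight x th / Z x.
Let above x := [fset th in Theta | x < ratio th].

Lemma pi_ratio th : th \in Theta -> pi th * ratio th = pit th.
Proof. by move=> thT; rewrite mulrC divfK ?gt_eqF ?pi_pos. Qed.

Lemma ratio_ge0 th : th \in Theta -> 0 <= ratio th.
Proof. by move=> thT; rewrite divr_ge0 ?pit_ge0 ?ltW ?pi_pos. Qed.

Lemma ratio_mono : {in Theta &, {homo ratio : u v / u <= v}}.
Proof.
move=> u v uT vT; rewrite le_eqVlt => /predU1P[->//|uv].
by rewrite ler_pdivrMr ?pi_pos // mulrAC ler_pdivlMr ?pi_pos ?lr.
Qed.

Lemma Z_pos x : 0 < Z x.
Proof.
apply: lt_le_trans ltr01 _; rewrite -pit1 /Z /mass !big_seq ler_sum // => th thT.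
by rewrite -pi_ratio // ler_wpM2l ?le_max ?lexx // ltW ?pi_pos.
Qed.

Lemma floored_mass x : mass (floored x) Theta = 1.
Proof. by rewrite /mass /floored -big_distrl /= -/(mass _ _) divff // gt_eqF ?Z_pos. Qed.

Lemma floored_ge0 x : {in Theta, forall th, 0 <= floored x th}.
Proof.
move=> th thT; rewrite divr_ge0 ?(ltW (Z_pos x)) // mulr_ge0 ?(ltW (pi_pos _ thT)) //.
by rewrite le_max ratio_ge0.
Qed.

Lemma floored0 : {in Theta, floored 0 =1 pit}.
Proof.
have max_ratio th : th \in Theta -> Num.max (ratio th) 0 = ratio th.
  by move=> thT; rewrite max_l ?ratio_ge0.
have Z0 : Z 0 = 1.
  by rewrite -pit1 /Z /mass !big_seq; apply: eq_bigr => th thT; rewrite /weight max_ratio ?pi_ratio.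
by move=> th thT; rewrite /floored Z0 divr1 /weight max_ratio ?pi_ratio.
Qed.

Lemma floored_top x : {in Theta, forall th, ratio th <= x} -> {in Theta, floored x =1 pi}.
Proof.
move=> below_x.
have Zx : Z x = x.
  rewrite /Z /mass big_seq (eq_bigr (fun th => pi th * x)) -?big_seq -?big_distrl /=.
    by rewrite -/(mass pi Theta) pi1 mul1r.
  by move=> th thT; rewrite /weight max_r ?below_x.
by move=> th thT; rewrite /floored /weight max_r ?below_x // Zx mulfK // gt_eqF // -Zx Z_pos.
Qed.

Lemma floored_step x x' : 0 <= x -> x < x' ->
  {in Theta, forall th, x < ratio th -> x' <= ratio th} ->
  {in Theta, forall th, floored x th =
     floored x' th * (if th \in above x then Z x' / Z x else x / x' * (Z x' / Z x))}.
Proof.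
move=> x0 xx' gap th thT; rewrite /floored /weight /above !inE thT /=.
have Zx := Z_pos x; have Zx' := Z_pos x'; have x'0 := le_lt_trans x0 xx'.
have [r_x|x_r] := leP (ratio th) x.
  by rewrite !max_r ?(le_trans r_x (ltW xx')) //; field; rewrite !gt_eqF.
by rewrite !max_l ?gap ?(ltW x_r) //; field; rewrite !gt_eqF.
Qed.

Lemma above_upper x : upper_set Theta (above x).
Proof.
split=> [th|th th']; rewrite !inE; first by case/andP.
case/andP=> thT x_r th'T thth'; rewrite th'T.
exact: lt_le_trans x_r (ratio_mono _ _ thT th'T (ltW thth')).
Qed.

Lemma reach_floored_step x x' th1 rho : 0 <= x -> x < x' ->
  {in Theta, forall th, x < ratio th -> x' <= ratio th} -> th1 \in above x ->
  mono_reach Theta pi rho -> {in Theta, floored x' =1 rho} ->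
  exists2 rho', mono_reach Theta pi rho' & {in Theta, floored x =1 rho'}.
Proof.
move=> x0 xx' gap th1_above reach_rho floored_rho.
have x'0 : 0 < x' := le_lt_trans x0 xx'.
set be := Z x' / Z x; set ga := x / x' * be.
have ga_be : 0 <= ga <= be.
  have be0 : 0 < be by rewrite divr_gt0 ?Z_pos.
  have frac_le1 : x / x' <= 1 by rewrite ler_pdivrMr // mul1r ltW.
  have frac_ge0 : 0 <= x / x' by rewrite divr_ge0 // ltW.
  by rewrite mulr_ge0 ?ler_piMl // ltW.
have rho1 : mass rho Theta = 1.
  by rewrite -(floored_mass x') /mass !big_seq; apply: eq_bigr => th /floored_rho.
have mass_pos : 0 < mass rho (above x).
  have := th1_above; rewrite !inE => /andP[th1T _].
  rewrite /mass (big_fsetD1 th1) //= -floored_rho //.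
  have rest0 : 0 <= \sum_(th <- above x `\ th1) rho th.
    rewrite big_seq sumr_ge0 // => th; rewrite !inE => /and3P[_ thT _].
    by rewrite -floored_rho ?floored_ge0.
  apply: ltr_wpDr rest0 _.
  by rewrite /floored /weight divr_gt0 ?Z_pos // mulr_gt0 ?pi_pos // lt_max x'0 orbT.
have [a01 floored_eq] : 0 <= 1 - ga <= 1 /\
    {in Theta, floored x =1 strengthen (above x) (1 - ga) rho}.
  apply: (strengthen_of_rescale _ _ _ _ be ga _ rho1 mass_pos ga_be _ (floored_mass x)).
    by move=> th; rewrite !inE => /andP[].
  by move=> th thT; rewrite (floored_step _ _ x0 xx' gap) // floored_rho.
exists (strengthen (above x) (1 - ga) rho) => //.
exact: mono_reachS reach_rho (above_upper x) a01 mass_pos.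
Qed.

Lemma reach_floored n x : 0 <= x -> #|` above x| = n ->
  exists2 rho, mono_reach Theta pi rho & {in Theta, floored x =1 rho}.
Proof.
elim/ltn_ind: n x => n IH x x0 card_x.
have [above0|[th0 th0_above]] := fset_0Vmem (above x).
  exists pi; first exact: mono_reach0.
  apply: floored_top => th thT; rewrite leNgt; apply/negP => x_r.
  by have := in_fset0 th; rewrite -above0 !inE thT x_r.
have [th1 th1_above min_th1] := fset_argmin _ ratio _ th0_above.
have := th1_above; rewrite !inE => /andP[th1T x_th1].
have gap : {in Theta, forall th, x < ratio th -> ratio th1 <= ratio th}.
  by move=> th thT x_r; apply: min_th1; rewrite !inE thT.
have smaller : (#|` above (ratio th1)| < n)%N.
  rewrite -card_x; apply: fproper_ltn_card; rewrite fproperEneq; apply/andP; split.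
    by apply/eqP => eq_above; move: th1_above; rewrite -eq_above !inE ltxx andbF.
  apply/fsubsetP => th; rewrite !inE => /andP[-> th1_th]; exact: lt_trans x_th1 th1_th.
have [rho reach_rho floored_rho] := IH _ smaller _ (le_trans x0 (ltW x_th1)) erefl.
exact: reach_floored_step x0 x_th1 gap th1_above reach_rho floored_rho.
Qed.

Lemma strengthening_of_lr_ge_on : monotonic_strengthening Theta pi pit.
Proof.
have [rho reach_rho floored_rho] := reach_floored _ _ (lexx 0) erefl.
by exists rho; split=> // th thT; rewrite -floored0 ?floored_rho.
Qed.

End FlooredRatio.

Section FourSignals.
Context {R : realType}.

(* Signal distributions of four classes of states (below u, u, v, above v):
   rows 1 and 2 give signals 1 and 2 different odds and the other rows are
   point masses, so MLRP holds along increasing classes. *)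
Definition kernel (k : nat) (s : R) : R :=
  match k with
  | 0 => (s == 0%:R)%:R
  | 1 => 3/4 * (s == 1%:R)%:R + 1/4 * (s == 2%:R)%:R
  | 2 => 1/2 * (s == 1%:R)%:R + 1/2 * (s == 2%:R)%:R
  | _ => (s == 3%:R)%:R
  end.

Definition signals4 : {fset R} := [fset 0%:R; 1%:R; 2%:R; 3%:R].

Lemma signals4P s : s \in signals4 -> exists2 j, (j < 4)%N & s = j%:R.
Proof.
by rewrite !inE => /orP[/orP[/orP[|]|]|] /eqP->;
  [exists 0%N|exists 1%N|exists 2%N|exists 3%N].
Qed.

Lemma kernel_ge0 k s : 0 <= kernel k s.
Proof. by case: k => [|[|[|k]]] /=; rewrite ?addr_ge0 ?mulr_ge0 ?ler0n //; lra. Qed.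

Lemma kernel_mlrp k k' s s' : (k <= k')%N -> s \in signals4 -> s' \in signals4 ->
  s < s' -> kernel k s' * kernel k' s <= kernel k' s' * kernel k s.
Proof.
move=> kk' /signals4P[j _ ->] /signals4P[j' _ ->]; rewrite ltr_nat.
by case: j j' => [|[|[|[|j]]]] [|[|[|[|j']]]] //= _;
  case: k k' kk' => [|[|[|k]]] [|[|[|k']]] //= _; rewrite !eqr_nat /=; lra.
Qed.

Lemma kernel_sum k : \sum_(s <- signals4) kernel k s = 1.
Proof.
have mem j : (j < 4)%N -> (j%:R : R) \in signals4.
  by case: j => [|[|[|[|j]]]] //= _; rewrite !inE eqxx ?orbT.
have delta j : (j < 4)%N -> \sum_(s <- signals4) (s == j%:R)%:R = 1 :> R.
  by move=> /mem j4; under eq_bigr do rewrite -[_%:R]mul1r; rewrite sum_delta.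
case: k => [|[|[|k]]] /=; rewrite ?big_split /= -?big_distrr /= ?delta //; lra.
Qed.

End FourSignals.

Section AdjacentStates.
Context {R : realType}.
Variables (Theta : {fset R}) (pi pit : R -> R) (u v : R).
Hypotheses (pi_pos : {in Theta, forall th, 0 < pi th})
  (uT : u \in Theta) (vT : v \in Theta) (uv : u < v)
  (adjacent : forall th, th \in Theta -> u < th -> v <= th).

Let state_class th := ((u <= th)%R + (v <= th)%R + (v < th)%R)%N.
Let sigma th (s : R) := kernel (state_class th) s.
Let Gamma := [fset th in Theta | v <= th].

Lemma state_classE th : th \in Theta ->
  [\/ th < u /\ state_class th = 0%N, th = u /\ state_class th = 1%N,
      th = v /\ state_class th = 2%N | v < th /\ state_class th = 3%N].
Proof.
move=> thT; rewrite /state_class.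
have [thu|uth|->] := ltgtP th u.
- have thv := lt_trans thu uv.
  by constructor 1; rewrite leNgt thv ltNge (ltW thv).
- have [vth|thv|<-] := ltgtP v th.
  + by constructor 4.
  + by move: (adjacent th thT uth); rewrite leNgt thv.
  + by constructor 3.
- by constructor 2; rewrite leNgt uv ltNge (ltW uv).
Qed.

Lemma state_class_mono th th' : th <= th' -> (state_class th <= state_class th')%N.
Proof.
move=> thth'; have ind (a b : bool) : (a -> b) -> (a <= b)%N by case: a b => [] [] // /(_ isT).
rewrite /state_class !leq_add ?ind // => h.
- exact: le_trans h thth'.
- exact: le_trans h thth'.
- exact: lt_le_trans h thth'.
Qed.

Lemma adjacent_signaling : signaling Theta signals4 sigma.
Proof. by move=> th _; split=> [s _|]; [exact: kernel_ge0 | exact: kernel_sum]. Qed.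

Lemma adjacent_MLRP : MLRP Theta signals4 sigma.
Proof.
move=> s s' th th' sS s'S _ _ ss' thth'.
by apply: kernel_mlrp => //; apply: state_class_mono; exact: ltW.
Qed.

Lemma adjacent_upper : upper_set Theta Gamma.
Proof.
split=> [th|th th']; rewrite !inE; first by case/andP.
by case/andP=> _ vth -> thth'; rewrite (le_trans vth (ltW thth')).
Qed.

Lemma Gamma_mem th : th \in Theta -> (th \in Gamma) = (v <= th).
Proof. by rewrite !inE => ->. Qed.

Lemma marg_middle Q j : (0 < j < 3)%N ->
  marg Theta Q sigma j%:R = Q u * kernel 1 j%:R + Q v * kernel 2 j%:R.
Proof.
move=> j12; have neq_uv := lt_eqF uv.
rewrite /marg (eq_big_seq (fun th =>
  Q u * kernel 1 j%:R * (th == u)%:R + Q v * kernel 2 j%:R * (th == v)%:R)).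
  by rewrite big_split /= !(sum_delta _ (fun=> _)).
move=> th thT; rewrite /sigma.
case: (state_classE th thT) => [[thu ->]|[-> ->]|[-> ->]|[vth ->]].
- rewrite !lt_eqF ?(lt_trans thu uv) //= !mulr0 addr0.
  by case: j j12 => [|[|[|j]]] //= _; rewrite eqr_nat mulr0.
- by rewrite eqxx neq_uv /= mulr1 mulr0 addr0.
- by rewrite eqxx eq_sym neq_uv /= mulr1 mulr0 add0r.
- rewrite !gt_eqF ?(lt_trans uv vth) //= !mulr0 addr0.
  by case: j j12 => [|[|[|j]]] //= _; rewrite eqr_nat mulr0.
Qed.

Lemma marg1 Q : marg Theta Q sigma 1%:R = Q u * (3/4) + Q v * (1/2).
Proof. by rewrite marg_middle //= !eqr_nat /=; ring. Qed.

Lemma marg2 Q : marg Theta Q sigma 2%:R = Q u * (1/4) + Q v * (1/2).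
Proof. by rewrite marg_middle //= !eqr_nat /=; ring. Qed.

Let P := posterior Theta Gamma pi sigma.

Lemma posterior_middle :
  [/\ 0 < P 1%:R, P 1%:R < P 2%:R & P 2%:R < 1].
Proof.
have piu := pi_pos u uT; have piv := pi_pos v vT.
rewrite /P !posteriorE marg1 marg2 marg1 marg2 !Gamma_mem // lexx leNgt uv /=.
rewrite !mulr0 !mul0r !add0r !mulr1; split.
- by rewrite divr_gt0 //; lra.
- by rewrite ltr_pM2l ?ltf_pV2 ?posrE; lra.
- by rewrite ltr_pdivrMr ?mul1r; lra.
Qed.

Lemma posterior_bottom : P 0%:R = 0.
Proof.
rewrite /P posteriorE /marg big_seq big1 ?mul0r // => th thT; rewrite /sigma Gamma_mem //.
case: (state_classE th thT) => [[thu _]|[-> _]|[-> ->]|[vth ->]].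
- by rewrite leNgt (lt_trans thu uv) mulr0 mul0r.
- by rewrite leNgt uv mulr0 mul0r.
- by rewrite /= !eqr_nat /= !mulr0 addr0 mulr0.
- by rewrite /= !eqr_nat /= !mulr0.
Qed.

Lemma posterior_top : P 3%:R = 0 \/ P 3%:R = 1.
Proof.
have -> : P 3%:R = marg Theta pi sigma 3%:R / marg Theta pi sigma 3%:R.
  rewrite /P posteriorE; congr (_ / _); rewrite /marg !big_seq.
  apply: eq_bigr => th thT; rewrite /sigma Gamma_mem //.
  case: (state_classE th thT) => [[thu ->]|[-> ->]|[-> _]|[vth _]].
  - by rewrite /= !eqr_nat /= !mulr0.
  - by rewrite /= !eqr_nat /= !mulr0 addr0 !mulr0.
  - by rewrite lexx mulr1.
  - by rewrite (ltW vth) mulr1.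
have [->|m0] := eqVneq (marg Theta pi sigma 3%:R) 0; first by left; rewrite mul0r.
by right; rewrite divff.
Qed.

Lemma posterior_outer s : s \in signals4 -> s != 1%:R -> s != 2%:R -> P s = 0 \/ P s = 1.
Proof.
move=> /signals4P[j j4 ->]; rewrite !eqr_nat.
by case: j j4 => [|[|[|[|j]]]] //= _ _ _;
  [left; exact: posterior_bottom | exact: posterior_top].
Qed.

Lemma lr_ge_adjacent : monotonic_optimistic Theta pi pit -> pit u * pi v <= pit v * pi u.
Proof.
move=> optimistic; have [P1_gt0 P12 P2_lt1] := posterior_middle.
have P_eq1 : {in signals4, forall s, (P s == P 1%:R) = (s == 1%:R)}.
  move=> s sS; have [->|s1] := eqVneq s 1%:R; first by rewrite eqxx.
  have [->|s2] := eqVneq s 2%:R; first by rewrite gt_eqF.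
  by case: (posterior_outer s sS s1 s2) => ->;
    [exact: lt_eqF | exact: gt_eqF (lt_trans P12 P2_lt1)].
have P_eq2 : {in signals4, forall s, (P s == P 2%:R) = (s == 2%:R)}.
  move=> s sS; have [->|s2] := eqVneq s 2%:R; first by rewrite eqxx.
  have [->|s1] := eqVneq s 1%:R; first by rewrite lt_eqF.
  by case: (posterior_outer s sS s1 s2) => ->;
    [exact: lt_eqF (lt_trans P1_gt0 P12) | exact: gt_eqF].
have S1 : (1%:R : R) \in signals4 by rewrite !inE eqxx !orbT.
have S2 : (2%:R : R) \in signals4 by rewrite !inE eqxx !orbT.
have := optimistic Gamma adjacent_upper signals4 sigma adjacent_signaling adjacent_MLRP _ _ P12.
rewrite -/P !(pmass_pred1 _ _ _ _ S1 P_eq1) !(pmass_pred1 _ _ _ _ S2 P_eq2) !marg1 !marg2.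
have := pi_pos u uT; have := pi_pos v vT; nra.
Qed.

End AdjacentStates.

Lemma lr_ge_on_of_optimistic {R : realType} (Theta : {fset R}) (pi pit : R -> R) :
  {in Theta, forall th, 0 < pi th} -> monotonic_optimistic Theta pi pit ->
  lr_ge_on Theta pit pi.
Proof.
move=> pi_pos optimistic; apply: lr_ge_on_of_adjacent => // u v uT vT uv adjacent.
exact: (lr_ge_adjacent _ _ _ _ _ pi_pos uT vT uv adjacent optimistic).
Qed.

Theorem proposition4 (R : realType) (Theta : {fset R}) (pi pit : R -> R) :
  is_prob Theta pi -> (forall th, th \in Theta -> 0 < pi th) ->
  is_prob Theta pit ->
  (monotonic_optimistic Theta pi pit <-> monotonic_strengthening Theta pi pit) /\
  (monotonic_strengthening Theta pi pit <-> lr_ge Theta (fun x => x) pit pi) /\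
  (monotonic_strengthening Theta pi pit <->
     (forall (S : {fset R}) (sigma : R -> R -> R),
        signaling Theta S sigma -> MLRP Theta S sigma ->
        lr_ge S (fun s => s) (marg Theta pit sigma) (marg Theta pi sigma))) /\
  (monotonic_strengthening Theta pi pit <->
     (forall (S : {fset R}) (sigma : R -> R -> R),
        signaling Theta S sigma -> MLRP Theta S sigma ->
        forall Rf : R -> R, {in S &, forall s s', s <= s' -> Rf s <= Rf s'} ->
        lr_ge S Rf (marg Theta pit sigma) (marg Theta pi sigma))).
Proof.
move=> [_ pi1] pi_pos [pit_ge0 pit1].
have strengthening_lr : monotonic_strengthening Theta pi pit <-> lr_ge_on Theta pit pi.
  split=> [[rho [reach pit_rho]] u v uT vT uv|]; last exact: strengthening_of_lr_ge_on.
  by rewrite !pit_rho //; apply: (lr_ge_on_of_reach _ _ _ pi_pos reach).2.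
have lr_iii := lr_ge_marg_of_lr_ge_on _ _ _ pi_pos.
have ii_lr := @lr_ge_on_of_lr_ge_marg _ Theta pi pit.
rewrite strengthening_lr lr_ge_idP; split; last split; last split.
- split; [exact: lr_ge_on_of_optimistic | exact: optimistic_of_lr_ge_on].
- by [].
- split=> [lr S sigma sg mlrp|]; last exact: ii_lr.
  by apply: lr_iii => // s s' _ _.
- split=> [|iii]; first exact: lr_iii.
  by apply: ii_lr => S sigma sg mlrp; apply: iii => // s s' _ _.
Qed.
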